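(* Let $f:\mathbb{R}^2_+\to\mathbb{R}$ be continuous, with $f(0,0)>0$, and assume there exists $R>0$ such that $f(x,y)<0$ whenever $x^2+y^2>R^2$. Then the zero set $Z=\{\mathbf z\in\mathbb{R}^2_+ : f(\mathbf z)=0\}$ has a compact connected subset $S$ which intersects both sets $\{(0,y) : r\le y\le R\}$ and $\{(x,0) : r\le x\le R\}$ for some $r\in(0,R)$.
   Context: $\mathbb{R}^2_+$ denotes the closed positive quadrant $\{(x,y):x\ge0,\,y\ge0\}$. *)

From Stdlib Require Import Reals List.
Open Scope R_scope.

Definition dist2 (p q : R * R) : R :=
  sqrt ((fst p - fst q) ^ 2 + (snd p - snd q) ^ 2).

Definition quadrant (p : R * R) : Prop := 0 <= fst p /\ 0 <= snd p.

Definition continuous_on_quadrant (f : R * R -> R) : Prop :=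
  forall p, quadrant p -> forall eps, 0 < eps ->
    exists delta, 0 < delta /\
      forall q, quadrant q -> dist2 q p < delta -> Rabs (f q - f p) < eps.

Definition open2 (U : R * R -> Prop) : Prop :=
  forall p, U p -> exists e, 0 < e /\ forall q, dist2 p q < e -> U q.

Definition compact2 (S : R * R -> Prop) : Prop :=
  forall (I : Type) (U : I -> R * R -> Prop),
    (forall i, open2 (U i)) ->
    (forall p, S p -> exists i, U i p) ->
    exists l : list I, forall p, S p -> exists i, In i l /\ U i p.

Definition connected2 (S : R * R -> Prop) : Prop :=
  ~ exists U V : R * R -> Prop,
      open2 U /\ open2 V /\
      (forall p, S p -> U p \/ V p) /\
      (exists p, S p /\ U p) /\
      (exists p, S p /\ V p) /\
      (forall p, S p -> U p -> V p -> False).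

(* Fix [e > 0] and suppose no [e]-chain of zeros of [f] joins the [y]-axis to the [x]-axis.
   On a fine triangulated grid of [[0, L]^2], count mod 2 the grid edges along which [f]
   changes sign at a zero [e]-chained to the [y]-axis: each small triangle contributes an
   even number, while the boundary contributes exactly one, the sign change of [f] along the
   [y]-axis between [(0, 0)] and [(0, L)].  Hence such chains exist for every [e]; by
   compactness of the zero set [Z] there are points [a], [b] on the two axes joined by
   [e]-chains for all [e].  The points of [Z] chained to [a] at every scale form a compact
   connected set, and continuity at the origin keeps [Z], hence [a] and [b], away from
   [(0, 0)]. *)

From Stdlib Require Import Reals List Lra Psatz Classical ClassicalEpsilon Lia.
From Coquelicot Require Compactness.
Open Scope R_scope.

Lemma dist2_sym p q : dist2 p q = dist2 q p.
Proof. unfold dist2; f_equal; ring. Qed.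

Lemma dist2_nonneg p q : 0 <= dist2 p q.
Proof. apply sqrt_pos. Qed.

Lemma dist2_xx p : dist2 p p = 0.
Proof.
  unfold dist2. replace ((fst p - fst p) ^ 2 + (snd p - snd p) ^ 2) with 0 by ring.
  apply sqrt_0.
Qed.

Lemma dist2_triangle p q r : dist2 p r <= dist2 p q + dist2 q r.
Proof.
  assert (Heuc : forall u v, dist2 u v = dist_euc (fst u) (snd u) (fst v) (snd v)).
  { intros u v; unfold dist2, dist_euc, Rsqr; f_equal; ring. }
  rewrite !Heuc; apply triangle.
Qed.

Lemma Rabs_fst_le_dist2 p q : Rabs (fst p - fst q) <= dist2 p q.
Proof.
  unfold dist2. rewrite <- sqrt_Rsqr_abs. apply sqrt_le_1_alt. unfold Rsqr.
  pose proof (pow2_ge_0 (snd p - snd q)). lra.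
Qed.

Lemma Rabs_snd_le_dist2 p q : Rabs (snd p - snd q) <= dist2 p q.
Proof.
  unfold dist2. rewrite <- sqrt_Rsqr_abs. apply sqrt_le_1_alt. unfold Rsqr.
  pose proof (pow2_ge_0 (fst p - fst q)). lra.
Qed.

Lemma dist2_le_l1 p q : dist2 p q <= Rabs (fst p - fst q) + Rabs (snd p - snd q).
Proof.
  unfold dist2. set (a := fst p - fst q). set (b := snd p - snd q).
  pose proof (Rabs_pos a); pose proof (Rabs_pos b).
  rewrite <- (sqrt_Rsqr (Rabs a + Rabs b)) by lra.
  apply sqrt_le_1_alt. unfold Rsqr. rewrite <- (pow2_abs a), <- (pow2_abs b). nra.
Qed.

Definition closed2 (T : R * R -> Prop) : Prop :=
  forall z, ~ T z -> exists rho, 0 < rho /\ forall w, T w -> dist2 w z < rho -> False.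

Definition in_square (M : R) (T : R * R -> Prop) : Prop :=
  forall z, T z -> 0 <= fst z <= M /\ 0 <= snd z <= M.

Lemma uniform_of_local (T : R * R -> Prop) (M : R) (P : R * R -> R -> Prop) :
  in_square M T -> closed2 T ->
  (forall w eta eta', 0 < eta' <= eta -> P w eta -> P w eta') ->
  (forall z, T z -> exists r eta, 0 < r /\ 0 < eta /\
     forall w, T w -> dist2 w z < r -> P w eta) ->
  exists eta, 0 < eta /\ forall w, T w -> P w eta.
Proof.
  intros Hsq Hcl Hmono Hloc.
  assert (Hd : forall z, exists d : posreal,
     forall w, T w -> dist2 w z < 2 * d -> P w d).
  { intros z. destruct (classic (T z)) as [Tz|nTz].
    - destruct (Hloc _ Tz) as (r & eta & Hr & He & H).
      assert (Hp : 0 < Rmin (r / 2) eta) by (apply Rmin_pos; lra).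
      exists (mkposreal _ Hp); simpl. intros w Tw Hw.
      apply (Hmono w eta); [split; [lra | apply Rmin_r]|].
      apply H; auto. pose proof (Rmin_l (r / 2) eta). lra.
    - destruct (Hcl _ nTz) as (rho & Hr & H).
      assert (Hp : 0 < rho / 2) by lra.
      exists (mkposreal _ Hp); simpl. intros w Tw Hw. exfalso. apply (H w Tw). lra. }
  destruct (choice _ Hd) as (delta & Hdelta).
  destruct (Compactness.compactness_value_2d 0 M 0 M (fun u v => delta (u, v))) as [d Hdv].
  exists d. split; [apply cond_pos|].
  intros w Tw. destruct (Hsq w Tw) as [Hx Hy].
  apply NNPP. intro Hn. apply (Hdv (fst w) (snd w) Hx Hy).
  intros (u & v & _ & _ & H1 & H2 & H3). apply Hn.
  apply (Hmono w (delta (u, v))); [split; [apply cond_pos | exact H3]|].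
  apply Hdelta; auto. pose proof (dist2_le_l1 w (u, v)). simpl in *. lra.
Qed.

Lemma list_choice {A B : Type} (l : list A) (Q : A -> Prop) (P : A -> B -> Prop) :
  (forall t, In t l -> Q t -> exists b, P t b) ->
  exists lb : list B, forall t, In t l -> Q t -> exists b, In b lb /\ P t b.
Proof.
  induction l as [|t l IH]; intros H.
  - exists nil. intros t [].
  - destruct IH as (lb & Hlb); [intros t' Ht'; apply H; right; exact Ht'|].
    destruct (classic (Q t)) as [Qt|nQt].
    + destruct (H t (or_introl eq_refl) Qt) as (b & Hb).
      exists (b :: lb). intros t' [<-|Ht'] Qt'.
      * exists b. split; [left|]; auto.
      * destruct (Hlb t' Ht' Qt') as (b' & Hb' & Pb'). exists b'. split; [right|]; auto.
    + exists lb. intros t' [<-|Ht'] Qt'; [contradiction | exact (Hlb t' Ht' Qt')].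
Qed.

Lemma compact2_of_closed_in_square (T : R * R -> Prop) (M : R) :
  in_square M T -> closed2 T -> compact2 T.
Proof.
  intros Hsq Hcl I U Hop Hcov.
  destruct (uniform_of_local T M (fun w eta => exists i, forall y, dist2 y w < eta -> U i y)
              Hsq Hcl) as (eta & Heta & Hunif).
  { intros w e e' He (i & Hi). exists i. intros y Hy. apply Hi. lra. }
  { intros z Tz. destruct (Hcov z Tz) as (i & Hi). destruct (Hop i z Hi) as (e & He & Hball).
    exists (e / 2), (e / 2). split; [lra|]. split; [lra|]. intros w Tw Hw. exists i.
    intros y Hy. apply Hball. pose proof (dist2_triangle z w y).
    rewrite (dist2_sym z w), (dist2_sym w y) in H. lra. }
  assert (Hp : 0 < eta / 4) by lra.
  set (d := mkposreal _ Hp).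
  set (close := fun (y : R * R) (t : Compactness.Tn 2 R) =>
                  Compactness.close_n 2 d (fst y, (snd y, tt)) t).
  assert (Hclose : forall y y' t, close y t -> close y' t -> dist2 y y' < eta).
  { intros y y' (t1 & t2 & []) (H1 & H2 & _) (H1' & H2' & _). simpl in *.
    pose proof (dist2_le_l1 y y').
    pose proof (Rabs_triang (fst y - t1) (- (fst y' - t1))).
    pose proof (Rabs_triang (snd y - t2) (- (snd y' - t2))).
    rewrite Rabs_Ropp in *.
    replace (fst y - t1 + - (fst y' - t1)) with (fst y - fst y') in * by ring.
    replace (snd y - t2 + - (snd y' - t2)) with (snd y - snd y') in * by ring. lra. }
  apply NNPP. intro Hno.
  apply (Compactness.compactness_list 2 (0, (0, tt)) (M, (M, tt)) (fun _ => d)).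
  intros (l & Hl).
  destruct (list_choice l (fun t => exists x, T x /\ close x t)
              (fun t i => forall y, close y t -> U i y)) as (li & Hli).
  { intros t _ (x & Tx & Hx). destruct (Hunif x Tx) as (i & Hi).
    exists i. intros y Hy. apply Hi. rewrite dist2_sym. exact (Hclose _ _ _ Hx Hy). }
  apply Hno. exists li. intros p Tp. destruct (Hsq p Tp).
  destruct (Hl (fst p, (snd p, tt))) as (t & Ht & _ & Hc); [simpl; tauto|].
  destruct (Hli t Ht) as (i & Hi & HU); [exists p; auto|].
  exists i. split; [exact Hi | apply HU, Hc].
Qed.

Lemma closed2_and (A B : R * R -> Prop) :
  closed2 A -> closed2 B -> closed2 (fun z => A z /\ B z).
Proof.
  intros HA HB z Hz. destruct (classic (A z)) as [Az|nAz].
  - assert (nBz : ~ B z) by tauto.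
    destruct (HB z nBz) as (rho & Hr & H). exists rho. split; [exact Hr|].
    intros w [_ Bw]. apply H, Bw.
  - destruct (HA z nAz) as (rho & Hr & H). exists rho. split; [exact Hr|].
    intros w [Aw _]. apply H, Aw.
Qed.

Lemma closed2_fst_eq c : closed2 (fun z => fst z = c).
Proof.
  intros z Hz. exists (Rabs (fst z - c)). split; [apply Rabs_pos_lt; lra|].
  intros w Hw Hd. pose proof (Rabs_fst_le_dist2 w z).
  rewrite Hw, <- Rabs_Ropp, Ropp_minus_distr in H. lra.
Qed.

Lemma closed2_snd_eq c : closed2 (fun z => snd z = c).
Proof.
  intros z Hz. exists (Rabs (snd z - c)). split; [apply Rabs_pos_lt; lra|].
  intros w Hw Hd. pose proof (Rabs_snd_le_dist2 w z).
  rewrite Hw, <- Rabs_Ropp, Ropp_minus_distr in H. lra.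
Qed.

Definition zero_set (f : R * R -> R) (z : R * R) : Prop := quadrant z /\ f z = 0.

Lemma closed2_zero_set f : continuous_on_quadrant f -> closed2 (zero_set f).
Proof.
  intros Hc [x y] nZ.
  destruct (Rlt_dec x 0) as [Hx|Hx].
  { exists (- x). split; [lra|]. intros w [[Hw _] _] Hd.
    pose proof (Rabs_fst_le_dist2 w (x, y)). simpl in *.
    rewrite Rabs_right in H by lra. lra. }
  destruct (Rlt_dec y 0) as [Hy|Hy].
  { exists (- y). split; [lra|]. intros w [[_ Hw] _] Hd.
    pose proof (Rabs_snd_le_dist2 w (x, y)). simpl in *.
    rewrite Rabs_right in H by lra. lra. }
  assert (Hq : quadrant (x, y)) by (unfold quadrant; simpl; lra).
  assert (Hfz : f (x, y) <> 0) by (intro; apply nZ; split; auto).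
  destruct (Hc (x, y) Hq (Rabs (f (x, y)))) as (d & Hd & H); [apply Rabs_pos_lt; auto|].
  exists d. split; [exact Hd|]. intros w [Qw Fw] Hdw. specialize (H w Qw Hdw).
  rewrite Fw, Rminus_0_l, Rabs_Ropp in H. lra.
Qed.

Lemma zero_set_in_square f Rad :
  (forall x y, 0 <= x -> 0 <= y -> x ^ 2 + y ^ 2 > Rad ^ 2 -> f (x, y) < 0) ->
  0 < Rad -> in_square Rad (zero_set f).
Proof.
  intros Hneg HR [x y] [[Hx Hy] Hz]. simpl in *.
  assert (x ^ 2 + y ^ 2 <= Rad ^ 2).
  { apply Rnot_lt_le. intro Hlt. assert (f (x, y) < 0) by (apply Hneg; auto). lra. }
  split; split; auto; nra.
Qed.

Lemma zero_set_away_from_origin f Rad :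
  continuous_on_quadrant f -> 0 < f (0, 0) -> 0 < Rad ->
  exists r, 0 < r /\ r < Rad /\ forall z, zero_set f z -> r <= fst z + snd z.
Proof.
  intros Hc Hf0 HR.
  assert (Hq0 : quadrant (0, 0)) by (unfold quadrant; simpl; lra).
  destruct (Hc (0, 0) Hq0 (f (0, 0)) Hf0) as (d & Hd & Hdd).
  exists (Rmin (d / 2) (Rad / 2)).
  pose proof (Rmin_l (d / 2) (Rad / 2)). pose proof (Rmin_r (d / 2) (Rad / 2)).
  split; [apply Rmin_pos; lra|]. split; [lra|].
  intros z [Qz Fz]. assert (Hdz : d <= dist2 z (0, 0)).
  { apply Rnot_lt_le. intro Hlt. specialize (Hdd z Qz Hlt).
    rewrite Fz, Rminus_0_l, Rabs_Ropp, Rabs_right in Hdd; lra. }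
  pose proof (dist2_le_l1 z (0, 0)). destruct Qz as [Hx Hy]. simpl in *.
  rewrite !Rminus_0_r, !Rabs_right in * by lra. lra.
Qed.

Inductive chain (K : R * R -> Prop) (e : R) : R * R -> R * R -> Prop :=
| chain_nil z : K z -> chain K e z z
| chain_cons z y w : K z -> dist2 z y < e -> chain K e y w -> chain K e z w.

Lemma chain_head K e z w : chain K e z w -> K z.
Proof. destruct 1; auto. Qed.

Lemma chain_last K e z w : chain K e z w -> K w.
Proof. induction 1; auto. Qed.

Lemma chain_le K e e' z w : e <= e' -> chain K e z w -> chain K e' z w.
Proof.
  intros He. induction 1; [apply chain_nil; auto|]. eapply chain_cons; eauto. lra.
Qed.

Lemma chain_rcons K e z y w : chain K e z y -> K w -> dist2 y w < e -> chain K e z w.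
Proof.
  induction 1; intros Kw Hd; eapply chain_cons; eauto. apply chain_nil; auto.
Qed.

Lemma chain_switch K e (P : R * R -> Prop) z w : chain K e z w -> P z -> ~ P w ->
  exists y1 y2, chain K e z y2 /\ P y1 /\ ~ P y2 /\ dist2 y1 y2 < e.
Proof.
  induction 1 as [z Kz|z y w Kz Hzy Hc IH]; intros Pz nPw; [contradiction|].
  destruct (classic (P y)) as [Py|nPy].
  - destruct (IH Py nPw) as (y1 & y2 & H1 & H2 & H3 & H4).
    exists y1, y2. repeat split; auto. eapply chain_cons; eauto.
  - exists z, y. repeat split; auto.
    eapply chain_cons; eauto. apply chain_nil. eapply chain_head; eauto.
Qed.

Definition chained (K : R * R -> Prop) (a z : R * R) : Prop :=
  forall e, 0 < e -> chain K e a z.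

Lemma not_chained K a z : ~ chained K a z -> exists e, 0 < e /\ ~ chain K e a z.
Proof.
  intro H. apply NNPP. intro H'. apply H. intros e He.
  apply NNPP. intro Hc. apply H'. exists e. auto.
Qed.

Lemma chained_refl K a : K a -> chained K a a.
Proof. intros Ka e He. apply chain_nil, Ka. Qed.

Definition chain_component (K : R * R -> Prop) (a z : R * R) : Prop :=
  K z /\ chained K a z.

Lemma closed2_chain_component K a : closed2 K -> closed2 (chain_component K a).
Proof.
  intros HK z Hz. destruct (classic (K z)) as [Kz|nKz].
  - assert (nCz : ~ chained K a z) by (intro; apply Hz; split; auto).
    destruct (not_chained _ _ _ nCz) as (e & He & Hne). exists e. split; [exact He|].
    intros w [Kw Cw] Hd. apply Hne. apply (chain_rcons K e a w z); auto.
  - destruct (HK z nKz) as (rho & Hr & H). exists rho. split; [exact Hr|].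
    intros w [Kw _]. apply H, Kw.
Qed.

Definition near_in (S U : R * R -> Prop) (w : R * R) (eta : R) : Prop :=
  exists z r, S z /\ eta <= r /\ dist2 w z < r /\ forall y, dist2 z y < 3 * r -> U y.

Lemma near_in_mem S U w eta : near_in S U w eta -> U w.
Proof.
  intros (z & r & _ & _ & Hw & HU). apply HU. rewrite dist2_sym.
  pose proof (dist2_nonneg w z). lra.
Qed.

Lemma near_in_le S U w eta eta' : eta' <= eta -> near_in S U w eta -> near_in S U w eta'.
Proof. intros He (z & r & H1 & H2 & H3 & H4). exists z, r. repeat split; auto; lra. Qed.

Lemma near_in_local S U z : S z -> U z -> open2 U ->
  exists r, 0 < r /\ forall w, dist2 w z < r -> near_in S U w r.
Proof.
  intros Sz Uz HU. destruct (HU z Uz) as (e & He & Hball).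
  exists (e / 3). split; [lra|]. intros w Hw. exists z, (e / 3).
  repeat split; auto; [lra|]. intros y Hy. apply Hball. lra.
Qed.

(* The [3 r]-ball of the larger of the two radii contains the other centre. *)
Lemma near_in_overlap S U V w w' eta :
  near_in S U w eta -> near_in S V w' eta -> dist2 w w' < eta ->
  exists z, S z /\ U z /\ V z.
Proof.
  intros (z1 & r1 & S1 & Hr1 & Hd1 & B1) (z2 & r2 & S2 & Hr2 & Hd2 & B2) Hd.
  pose proof (dist2_triangle z1 w z2). pose proof (dist2_triangle w w' z2).
  pose proof (dist2_xx z1). pose proof (dist2_xx z2). pose proof (dist2_nonneg w w').
  rewrite (dist2_sym z1 w) in *. rewrite (dist2_sym w' z2) in *.
  destruct (Rle_dec r2 r1).
  - exists z2. split; [exact S2 | split; [apply B1 | apply B2]]; lra.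
  - exists z1. split; [exact S1 | split; [apply B1 | apply B2; rewrite dist2_sym]]; lra.
Qed.

(* Uniformly in [w], either [w] is not [eta]-chained to [a] or it is [eta]-close to the
   component on one side; an [eta]-chain from the [U]-side to the [V]-side must then cross. *)
Lemma chain_component_unseparated K M a (U V : R * R -> Prop) :
  in_square M K -> closed2 K -> open2 U -> open2 V ->
  (forall p, chain_component K a p -> U p \/ V p) ->
  (forall p, chain_component K a p -> U p -> V p -> False) ->
  K a -> U a -> forall q, chain_component K a q -> V q -> False.
Proof.
  intros Hsq Hcl HU HV Hcov Hdis Ka Ua q Sq Vq.
  set (S := chain_component K a) in *.
  destruct (uniform_of_local K M
    (fun w eta => ~ chain K eta a w \/ near_in S U w eta \/ near_in S V w eta) Hsq Hcl)
    as (eta & Heta & Hu).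
  { intros w e e' He [H|[H|H]].
    - left. intro Hc. apply H. eapply chain_le; [|exact Hc]. lra.
    - right; left. eapply near_in_le; [|exact H]. lra.
    - right; right. eapply near_in_le; [|exact H]. lra. }
  { intros z Kz. destruct (classic (chained K a z)) as [Cz|nCz].
    - assert (Sz : S z) by (split; auto).
      destruct (Hcov z Sz) as [Uz|Vz].
      + destruct (near_in_local S U z Sz Uz HU) as (r & Hr & H).
        exists r, r. repeat split; auto.
      + destruct (near_in_local S V z Sz Vz HV) as (r & Hr & H).
        exists r, r. repeat split; auto.
    - destruct (not_chained _ _ _ nCz) as (e & He & Hne).
      exists (e / 2), (e / 2). split; [lra|]. split; [lra|].
      intros w Kw Hw. left. intro Hc. apply Hne.
      apply (chain_rcons K e a w z); [eapply chain_le; [|exact Hc] | exact Kz |]; lra. }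
  assert (Sa : S a) by (split; auto; apply chained_refl, Ka).
  assert (PA : near_in S U a eta).
  { destruct (Hu a Ka) as [H|[H|H]]; auto.
    - exfalso. apply H, chain_nil, Ka.
    - exfalso. exact (Hdis a Sa Ua (near_in_mem _ _ _ _ H)). }
  assert (PQ : ~ near_in S U q eta) by (intro H; exact (Hdis q Sq (near_in_mem _ _ _ _ H) Vq)).
  destruct Sq as [Kq Cq].
  destruct (chain_switch K eta (fun w => near_in S U w eta) a q (Cq _ Heta) PA PQ)
    as (y1 & y2 & Hc2 & P1 & nP2 & Hd).
  assert (Q2 : near_in S V y2 eta).
  { destruct (Hu y2 (chain_last _ _ _ _ Hc2)) as [H|[H|H]]; tauto. }
  destruct (near_in_overlap S U V y1 y2 eta P1 Q2 Hd) as (z & Sz & Uz & Vz).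
  exact (Hdis z Sz Uz Vz).
Qed.

Lemma connected2_chain_component K M a :
  in_square M K -> closed2 K -> K a -> connected2 (chain_component K a).
Proof.
  intros Hsq Hcl Ka (U & V & HU & HV & Hcov & (p & Sp & Up) & (q & Sq & Vq) & Hdis).
  assert (Sa : chain_component K a a) by (split; auto; apply chained_refl, Ka).
  destruct (Hcov a Sa) as [Ua|Va].
  - exact (chain_component_unseparated K M a U V Hsq Hcl HU HV Hcov Hdis Ka Ua q Sq Vq).
  - refine (chain_component_unseparated K M a V U Hsq Hcl HV HU _ _ Ka Va p Sp Up).
    + intros z Hz. destruct (Hcov z Hz); auto.
    + intros z Hz Hv Hu. exact (Hdis z Hz Hu Hv).
Qed.

Lemma chained_of_chains K (A B : R * R -> Prop) M :
  in_square M A -> in_square M B -> closed2 A -> closed2 B ->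
  (forall z, A z -> K z) -> (forall z, B z -> K z) ->
  (forall e, 0 < e -> exists a b, A a /\ B b /\ chain K e a b) ->
  exists a b, A a /\ B b /\ chained K a b.
Proof.
  intros HsqA HsqB HA HB HAK HBK Hchains. apply NNPP. intro Hn.
  assert (Hfrom : forall a, A a -> exists eta, 0 < eta /\ forall b, B b -> ~ chain K eta a b).
  { intros a Aa. apply (uniform_of_local B M (fun w eta => ~ chain K eta a w)); auto.
    - intros w e e' He H Hc. apply H. eapply chain_le; [|exact Hc]. lra.
    - intros z Bz. assert (nCz : ~ chained K a z) by (intro; apply Hn; exists a, z; auto).
      destruct (not_chained _ _ _ nCz) as (e & He & Hne).
      exists (e / 2), (e / 2). split; [lra|]. split; [lra|].
      intros w Bw Hw Hc. apply Hne.
      apply (chain_rcons K e a w z); [eapply chain_le; [|exact Hc] | apply HBK |]; auto; lra. }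
  destruct (uniform_of_local A M (fun w eta => forall b, B b -> ~ chain K eta w b) HsqA HA)
    as (eta & Heta & Hu).
  - intros w e e' He H b Bb Hc. apply (H b Bb). eapply chain_le; [|exact Hc]. lra.
  - intros z Az. destruct (Hfrom z Az) as (e & He & H).
    exists (e / 2), (e / 2). split; [lra|]. split; [lra|].
    intros w Aw Hw b Bb Hc. apply (H b Bb). apply (chain_cons K e z w b).
    + apply HAK, Az.
    + rewrite dist2_sym. lra.
    + eapply chain_le; [|exact Hc]. lra.
  - destruct (Hchains eta Heta) as (a & b & Aa & Bb & Hc). exact (Hu a Aa b Bb Hc).
Qed.

Definition segment_point (p q : R * R) (t : R) : R * R :=
  (fst p + t * (fst q - fst p), snd p + t * (snd q - snd p)).

Definition on_segment (p q z : R * R) : Prop :=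
  exists t, 0 <= t <= 1 /\ z = segment_point p q t.

Lemma on_segment_sym p q z : on_segment q p z -> on_segment p q z.
Proof.
  intros (t & Ht & ->). exists (1 - t). split; [lra|].
  unfold segment_point. f_equal; ring.
Qed.

Lemma segment_point_0 p q : segment_point p q 0 = p.
Proof. destruct p; unfold segment_point; simpl; f_equal; ring. Qed.

Lemma segment_point_1 p q : segment_point p q 1 = q.
Proof. destruct p, q; unfold segment_point; simpl; f_equal; ring. Qed.

Lemma dist2_segment_point p q s t :
  dist2 (segment_point p q s) (segment_point p q t)
  <= Rabs (s - t) * (Rabs (fst q - fst p) + Rabs (snd q - snd p)).
Proof.
  eapply Rle_trans; [apply dist2_le_l1|]. unfold segment_point; simpl.
  replace (fst p + s * (fst q - fst p) - (fst p + t * (fst q - fst p)))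
    with ((s - t) * (fst q - fst p)) by ring.
  replace (snd p + s * (snd q - snd p) - (snd p + t * (snd q - snd p)))
    with ((s - t) * (snd q - snd p)) by ring.
  rewrite !Rabs_mult. lra.
Qed.

Lemma quadrant_segment_point p q t :
  quadrant p -> quadrant q -> 0 <= t <= 1 -> quadrant (segment_point p q t).
Proof.
  destruct p as [px py], q as [qx qy]. unfold quadrant, segment_point; simpl.
  intros [? ?] [? ?] ?. split; nra.
Qed.

Definition clamp01 (t : R) : R := Rmax 0 (Rmin 1 t).

Lemma clamp01_lipschitz s t : Rabs (clamp01 s - clamp01 t) <= Rabs (s - t).
Proof.
  unfold clamp01, Rmax, Rmin.
  repeat destruct Rle_dec; unfold Rabs; repeat destruct Rcase_abs; lra.
Qed.

Lemma clamp01_range t : 0 <= clamp01 t <= 1.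
Proof. unfold clamp01, Rmax, Rmin. repeat destruct Rle_dec; lra. Qed.

Lemma clamp01_id t : 0 <= t <= 1 -> clamp01 t = t.
Proof. intros. unfold clamp01, Rmax, Rmin. repeat destruct Rle_dec; lra. Qed.

(* Clamping the parameter to [0, 1] extends [f] along the segment to a function
   continuous on all of [R], as [IVT_cor] requires. *)
Lemma continuity_along_segment f p q :
  continuous_on_quadrant f -> quadrant p -> quadrant q ->
  continuity (fun t => f (segment_point p q (clamp01 t))).
Proof.
  intros Hc Hp Hq t0 eps Heps.
  destruct (Hc _ (quadrant_segment_point p q _ Hp Hq (clamp01_range t0)) eps Heps)
    as (d & Hd & H).
  set (D := Rabs (fst q - fst p) + Rabs (snd q - snd p) + 1).
  assert (HD : 0 < D).
  { unfold D. pose proof (Rabs_pos (fst q - fst p)). pose proof (Rabs_pos (snd q - snd p)). lra. }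
  exists (d / D). split; [apply Rdiv_lt_0_compat; lra|].
  intros t [_ Ht]. simpl in *. unfold R_dist in *.
  apply H; [apply quadrant_segment_point, clamp01_range; auto|].
  eapply Rle_lt_trans; [apply dist2_segment_point|].
  pose proof (clamp01_lipschitz t t0). pose proof (Rabs_pos (clamp01 t - clamp01 t0)).
  pose proof (Rabs_pos (fst q - fst p)). pose proof (Rabs_pos (snd q - snd p)).
  assert (Rabs (t - t0) * D < d).
  { apply (Rmult_lt_compat_r D) in Ht; auto.
    unfold Rdiv in Ht. rewrite Rmult_assoc, Rinv_l in Ht; lra. }
  unfold D in *. nra.
Qed.

Lemma segment_zero f p q : continuous_on_quadrant f -> quadrant p -> quadrant q ->
  0 < f p -> f q <= 0 -> exists z, zero_set f z /\ on_segment p q z.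
Proof.
  intros Hc Hp Hq Hfp Hfq.
  destruct (IVT_cor _ 0 1 (continuity_along_segment f p q Hc Hp Hq) ltac:(lra))
    as (t & Ht & Hz).
  { rewrite !clamp01_id, segment_point_0, segment_point_1 by lra. nra. }
  rewrite clamp01_id in Hz by lra.
  exists (segment_point p q t). split; [split; [apply quadrant_segment_point|]|]; auto.
  exists t. auto.
Qed.

Definition positive_at (f : R * R -> R) (p : R * R) : bool :=
  if Rlt_dec 0 (f p) then true else false.

Lemma segment_zero_of_sign_change f p q :
  continuous_on_quadrant f -> quadrant p -> quadrant q ->
  positive_at f p <> positive_at f q -> exists z, zero_set f z /\ on_segment p q z.
Proof.
  intros Hc Hp Hq. unfold positive_at.
  destruct (Rlt_dec 0 (f p)), (Rlt_dec 0 (f q)); intros H; try congruence.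
  - apply segment_zero; auto. lra.
  - destruct (segment_zero f q p) as (z & Hz & Hs); auto; [lra|].
    exists z. split; auto. apply on_segment_sym, Hs.
Qed.

Definition in_cell (x0 y0 h : R) (z : R * R) : Prop :=
  x0 <= fst z <= x0 + h /\ y0 <= snd z <= y0 + h.

Lemma on_segment_in_cell x0 y0 h p q z :
  in_cell x0 y0 h p -> in_cell x0 y0 h q -> on_segment p q z -> in_cell x0 y0 h z.
Proof.
  intros [[? ?] [? ?]] [[? ?] [? ?]] (t & Ht & ->).
  unfold in_cell, segment_point; simpl. repeat split; nra.
Qed.

Lemma dist2_in_cell x0 y0 h z z' :
  in_cell x0 y0 h z -> in_cell x0 y0 h z' -> dist2 z z' <= 2 * h.
Proof.
  intros [[? ?] [? ?]] [[? ?] [? ?]]. eapply Rle_trans; [apply dist2_le_l1|].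
  unfold Rabs; repeat destruct Rcase_abs; lra.
Qed.

Lemma xorb_true_neq a b : xorb a b = true -> a <> b.
Proof. destruct a, b; simpl; congruence. Qed.

Definition truth (P : Prop) : bool := if excluded_middle_informative P then true else false.

Lemma truth_iff (P Q : Prop) : (P <-> Q) -> truth P = truth Q.
Proof.
  intros H. unfold truth.
  destruct (excluded_middle_informative P), (excluded_middle_informative Q); tauto.
Qed.

Lemma truth_true (P : Prop) : P -> truth P = true.
Proof. intros H. unfold truth. destruct excluded_middle_informative; tauto. Qed.

Lemma truth_false (P : Prop) : ~ P -> truth P = false.
Proof. intros H. unfold truth. destruct excluded_middle_informative; tauto. Qed.

Section Crossing.

Variables (f : R * R -> R) (e : R).
Hypothesis Hc : continuous_on_quadrant f.

Definition reached (z : R * R) : Prop :=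
  exists a, zero_set f a /\ fst a = 0 /\ chain (zero_set f) e a z.

Definition crossing (p q : R * R) : bool :=
  andb (xorb (positive_at f p) (positive_at f q))
       (truth (exists z, zero_set f z /\ on_segment p q z /\ reached z)).

(* In a cell of diameter [< e] all zeros are reached or none is, so [crossing] is the
   sign change times a constant of the cell. *)
Lemma crossing_in_cell x0 y0 h p q :
  2 * h < e -> quadrant p -> quadrant q -> in_cell x0 y0 h p -> in_cell x0 y0 h q ->
  crossing p q = andb (xorb (positive_at f p) (positive_at f q))
                      (truth (exists z, zero_set f z /\ in_cell x0 y0 h z /\ reached z)).
Proof.
  intros He Hp Hq Cp Cq. unfold crossing.
  destruct (xorb (positive_at f p) (positive_at f q)) eqn:E; [simpl|reflexivity].
  apply truth_iff. split.
  - intros (z & Zz & Sz & Rz). exists z. split; [exact Zz|].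
    split; [exact (on_segment_in_cell _ _ _ _ _ _ Cp Cq Sz) | exact Rz].
  - intros (z & Zz & Cz & (a & Za & Ha & Hch)).
    pose proof (xorb_true_neq _ _ E) as Hs.
    destruct (segment_zero_of_sign_change f p q Hc Hp Hq Hs) as (z' & Zz' & Sz').
    exists z'. split; [exact Zz'|]. split; [exact Sz'|]. exists a. split; [exact Za|].
    split; [exact Ha|]. apply (chain_rcons _ _ a z z'); auto.
    pose proof (dist2_in_cell _ _ _ _ _ Cz (on_segment_in_cell _ _ _ _ _ _ Cp Cq Sz')). lra.
Qed.

Lemma crossing_triangle x0 y0 h p1 p2 p3 :
  2 * h < e -> quadrant p1 -> quadrant p2 -> quadrant p3 ->
  in_cell x0 y0 h p1 -> in_cell x0 y0 h p2 -> in_cell x0 y0 h p3 ->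
  xorb (crossing p1 p2) (xorb (crossing p2 p3) (crossing p1 p3)) = false.
Proof.
  intros. rewrite !(crossing_in_cell x0 y0 h) by auto.
  destruct (positive_at f p1), (positive_at f p2), (positive_at f p3), truth; reflexivity.
Qed.

Lemma crossing_y_axis p q : quadrant p -> quadrant q -> fst p = 0 -> fst q = 0 ->
  crossing p q = xorb (positive_at f p) (positive_at f q).
Proof.
  intros Hp Hq Hp0 Hq0. unfold crossing.
  destruct (xorb (positive_at f p) (positive_at f q)) eqn:E; [simpl|reflexivity].
  apply truth_true.
  pose proof (xorb_true_neq _ _ E) as Hs.
  destruct (segment_zero_of_sign_change f p q Hc Hp Hq Hs) as (z & Zz & Sz).
  assert (Hz0 : fst z = 0).
  { destruct Sz as (t & _ & ->). unfold segment_point; simpl. rewrite Hp0, Hq0. ring. }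
  exists z. split; [exact Zz|]. split; [exact Sz|].
  exists z. split; [exact Zz|]. split; [exact Hz0 | apply chain_nil, Zz].
Qed.

Lemma crossing_x_axis p q : snd p = 0 -> snd q = 0 ->
  ~ (exists z, snd z = 0 /\ reached z) -> crossing p q = false.
Proof.
  intros Hp0 Hq0 Hno. unfold crossing. rewrite truth_false, Bool.andb_false_r; [reflexivity|].
  intros (z & _ & (t & _ & ->) & Rz). apply Hno. exists (segment_point p q t).
  split; [unfold segment_point; simpl; rewrite Hp0, Hq0; ring | exact Rz].
Qed.

Lemma crossing_negative p q : f p < 0 -> f q < 0 -> crossing p q = false.
Proof.
  intros Hp Hq. unfold crossing, positive_at.
  destruct (Rlt_dec 0 (f p)), (Rlt_dec 0 (f q)); try lra. reflexivity.
Qed.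

End Crossing.

Fixpoint xor_sum (n : nat) (g : nat -> bool) : bool :=
  match n with O => false | S k => xorb (xor_sum k g) (g k) end.

Lemma xor_sum_ext n g k : (forall i, (i < n)%nat -> g i = k i) -> xor_sum n g = xor_sum n k.
Proof.
  induction n; intros H; simpl; auto.
  rewrite IHn by (intros; apply H; lia). rewrite H by lia. reflexivity.
Qed.

Lemma xor_sum_false n g : (forall i, (i < n)%nat -> g i = false) -> xor_sum n g = false.
Proof.
  intros H. rewrite (xor_sum_ext n g (fun _ => false)) by auto.
  induction n; simpl; auto. rewrite IHn; auto.
Qed.

Lemma xor_sum_xorb n g k :
  xor_sum n (fun i => xorb (g i) (k i)) = xorb (xor_sum n g) (xor_sum n k).
Proof.
  induction n; simpl; auto. rewrite IHn.
  destruct (xor_sum n g), (xor_sum n k), (g n), (k n); reflexivity.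
Qed.

Lemma xor_sum_telescope n g : xor_sum n (fun i => xorb (g i) (g (S i))) = xorb (g O) (g n).
Proof.
  induction n; simpl; [destruct (g O); reflexivity|]. rewrite IHn.
  destruct (g O), (g n), (g (S n)); reflexivity.
Qed.

Lemma xor_sum_comm n m g :
  xor_sum n (fun i => xor_sum m (fun j => g i j)) = xor_sum m (fun j => xor_sum n (fun i => g i j)).
Proof.
  induction n; simpl.
  - symmetry. apply xor_sum_false. auto.
  - rewrite IHn, <- xor_sum_xorb. reflexivity.
Qed.

(* Discrete Stokes theorem on the triangulated [N x N] grid, mod 2. *)
Lemma grid_parity N (c : nat * nat -> nat * nat -> bool) :
  (forall i j, (i < N)%nat -> (j < N)%nat ->
     xorb (c (i, j) (S i, j)) (xorb (c (S i, j) (S i, S j)) (c (i, j) (S i, S j))) = false) ->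
  (forall i j, (i < N)%nat -> (j < N)%nat ->
     xorb (c (i, j) (i, S j)) (xorb (c (i, S j) (S i, S j)) (c (i, j) (S i, S j))) = false) ->
  xorb (xor_sum N (fun i => xorb (c (i, O) (S i, O)) (c (i, N) (S i, N))))
       (xor_sum N (fun j => xorb (c (O, j) (O, S j)) (c (N, j) (N, S j)))) = false.
Proof.
  intros Hlow Hup.
  set (hor := fun i j => c (i, j) (S i, j)). set (ver := fun i j => c (i, j) (i, S j)).
  assert (Hcell : xor_sum N (fun i => xor_sum N (fun j =>
     xorb (xorb (hor i j) (hor i (S j))) (xorb (ver i j) (ver (S i) j)))) = false).
  { apply xor_sum_false. intros i Hi. apply xor_sum_false. intros j Hj.
    pose proof (Hlow i j Hi Hj). pose proof (Hup i j Hi Hj). unfold hor, ver.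
    destruct (c (i, j) (S i, j)), (c (i, S j) (S i, S j)), (c (i, j) (i, S j)),
      (c (S i, j) (S i, S j)), (c (i, j) (S i, S j)); simpl in *; congruence. }
  rewrite <- Hcell. symmetry.
  rewrite (xor_sum_ext N _ (fun i => xorb (xor_sum N (fun j => xorb (hor i j) (hor i (S j))))
                                      (xor_sum N (fun j => xorb (ver i j) (ver (S i) j)))))
    by (intros; apply xor_sum_xorb).
  rewrite xor_sum_xorb. f_equal.
  - apply xor_sum_ext. intros i _. apply (xor_sum_telescope N (fun j => hor i j)).
  - rewrite xor_sum_comm. apply xor_sum_ext. intros j _.
    apply (xor_sum_telescope N (fun i => ver i j)).
Qed.

Definition grid_point (h : R) (ij : nat * nat) : R * R := (INR (fst ij) * h, INR (snd ij) * h).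

Lemma quadrant_grid_point h ij : 0 <= h -> quadrant (grid_point h ij).
Proof.
  intros Hh. destruct ij as [i j]. unfold grid_point, quadrant; simpl.
  pose proof (pos_INR i); pose proof (pos_INR j). split; nra.
Qed.

Lemma grid_point_in_cell h i j i' j' :
  0 <= h -> (i' = i \/ i' = S i) -> (j' = j \/ j' = S j) ->
  in_cell (INR i * h) (INR j * h) h (grid_point h (i', j')).
Proof.
  intros Hh Hi Hj. unfold in_cell, grid_point; simpl.
  destruct Hi as [->| ->], Hj as [->| ->]; rewrite ?S_INR; lra.
Qed.

Lemma fine_grid L e : 0 < L -> 0 < e -> exists N h, 0 < h /\ INR N * h = L /\ 2 * h < e.
Proof.
  intros HL He. destruct (INR_archimed (e / 4) L) as (N & HN); [lra|].
  assert (HNpos : 0 < INR N) by nra.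
  exists N, (L / INR N). split; [apply Rdiv_lt_0_compat; lra|].
  split; [field; lra|]. apply (Rmult_lt_reg_r (INR N)); [exact HNpos|].
  replace (2 * (L / INR N) * INR N) with (2 * L) by (field; lra). lra.
Qed.

Lemma zero_set_axis_chain f Rad :
  continuous_on_quadrant f -> 0 < f (0, 0) -> 0 < Rad ->
  (forall x y, 0 <= x -> 0 <= y -> x ^ 2 + y ^ 2 > Rad ^ 2 -> f (x, y) < 0) ->
  forall e, 0 < e -> exists a b,
    (zero_set f a /\ fst a = 0) /\ (zero_set f b /\ snd b = 0) /\ chain (zero_set f) e a b.
Proof.
  intros Hc Hf0 HR Hneg e He.
  destruct (classic (exists z, snd z = 0 /\ reached f e z))
    as [(b & Hb & (a & Za & Ha & Hch))|Hno].
  { exists a, b. split; [auto|]. split; [split; [eapply chain_last; eauto | exact Hb]|exact Hch]. }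
  exfalso.
  destruct (fine_grid (Rad + 1) e ltac:(lra) He) as (N & h & Hh & HNh & H2h).
  set (P := grid_point h).
  assert (Pout : forall i j, (i = N \/ j = N) -> f (P (i, j)) < 0).
  { intros i j Hij. unfold P, grid_point; simpl. pose proof (pos_INR i); pose proof (pos_INR j).
    apply Hneg; [nra | nra |]. destruct Hij as [->| ->]; rewrite HNh; nra. }
  set (c := fun ij kl => crossing f e (P ij) (P kl)).
  assert (Hpar : xorb (xor_sum N (fun i => xorb (c (i, O) (S i, O)) (c (i, N) (S i, N))))
                      (xor_sum N (fun j => xorb (c (O, j) (O, S j)) (c (N, j) (N, S j)))) = false).
  { apply grid_parity; intros i j _ _; unfold c, P;
      apply (crossing_triangle f e Hc (INR i * h) (INR j * h) h);
      auto using quadrant_grid_point, grid_point_in_cell, Rlt_le. }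
  rewrite (xor_sum_false N (fun i => xorb (c (i, O) (S i, O)) (c (i, N) (S i, N)))) in Hpar.
  2: { intros i _. unfold c. rewrite (crossing_negative f e _ _ (Pout _ _ (or_intror eq_refl))
         (Pout _ _ (or_intror eq_refl))).
       rewrite (crossing_x_axis f e); auto; unfold P, grid_point; simpl; ring. }
  rewrite (xor_sum_ext N _ (fun j => xorb (positive_at f (P (O, j))) (positive_at f (P (O, S j)))))
    in Hpar.
  2: { intros j _. unfold c.
       rewrite (crossing_negative f e _ _ (Pout _ _ (or_introl eq_refl))
         (Pout _ _ (or_introl eq_refl))), Bool.xorb_false_r.
       apply (crossing_y_axis f e Hc); try (apply quadrant_grid_point; lra);
         unfold P, grid_point; simpl; ring. }
  rewrite xor_sum_telescope in Hpar.
  assert (C0 : positive_at f (P (O, O)) = true).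
  { unfold positive_at, P, grid_point. simpl. rewrite Rmult_0_l. destruct Rlt_dec; auto; lra. }
  assert (CN : positive_at f (P (O, N)) = false).
  { unfold positive_at. destruct Rlt_dec; auto. pose proof (Pout O N (or_intror eq_refl)). lra. }
  rewrite C0, CN in Hpar. discriminate Hpar.
Qed.

Lemma zero_set_chained_axis_points f Rad :
  continuous_on_quadrant f -> 0 < f (0, 0) -> 0 < Rad ->
  (forall x y, 0 <= x -> 0 <= y -> x ^ 2 + y ^ 2 > Rad ^ 2 -> f (x, y) < 0) ->
  exists a b,
    (zero_set f a /\ fst a = 0) /\ (zero_set f b /\ snd b = 0) /\ chained (zero_set f) a b.
Proof.
  intros Hc Hf0 HR Hneg.
  assert (Hsq : in_square Rad (zero_set f)) by (apply zero_set_in_square; auto).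
  assert (Hcl : closed2 (zero_set f)) by (apply closed2_zero_set, Hc).
  apply (chained_of_chains _ _ _ Rad).
  - intros z [Zz _]. apply Hsq, Zz.
  - intros z [Zz _]. apply Hsq, Zz.
  - apply closed2_and; [exact Hcl | apply closed2_fst_eq].
  - apply closed2_and; [exact Hcl | apply closed2_snd_eq].
  - intros z [Zz _]; exact Zz.
  - intros z [Zz _]; exact Zz.
  - apply (zero_set_axis_chain f Rad); auto.
Qed.

Theorem lemma2p2 (f : R * R -> R) (Rad : R) :
  continuous_on_quadrant f ->
  0 < f (0, 0) ->
  0 < Rad ->
  (forall x y, 0 <= x -> 0 <= y -> x ^ 2 + y ^ 2 > Rad ^ 2 -> f (x, y) < 0) ->
  exists S : R * R -> Prop,
    (forall z, S z -> quadrant z /\ f z = 0) /\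
    compact2 S /\ connected2 S /\
    exists r, 0 < r /\ r < Rad /\
      (exists y, r <= y <= Rad /\ S (0, y)) /\
      (exists x, r <= x <= Rad /\ S (x, 0)).
Proof.
  intros Hc Hf0 HR Hneg.
  assert (Hsq : in_square Rad (zero_set f)) by (apply zero_set_in_square; auto).
  assert (Hcl : closed2 (zero_set f)) by (apply closed2_zero_set, Hc).
  destruct (zero_set_chained_axis_points f Rad Hc Hf0 HR Hneg)
    as ([ax ay] & [bx by'] & [Za Ha] & [Zb Hb] & Cab); simpl in Ha, Hb; subst ax by'.
  destruct (zero_set_away_from_origin f Rad Hc Hf0 HR) as (r & Hr & HrR & Haway).
  exists (chain_component (zero_set f) (0, ay)). split; [|split; [|split]].
  - intros z [Zz _]. exact Zz.
  - apply (compact2_of_closed_in_square _ Rad); [intros z [Zz _]; apply Hsq, Zz|].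
    apply closed2_chain_component, Hcl.
  - apply (connected2_chain_component _ Rad); auto.
  - exists r. split; [exact Hr|]. split; [exact HrR|]. split.
    + exists ay. pose proof (Hsq _ Za). pose proof (Haway _ Za). simpl in *.
      split; [lra|]. split; [exact Za | apply chained_refl, Za].
    + exists bx. pose proof (Hsq _ Zb). pose proof (Haway _ Zb). simpl in *.
      split; [lra | split; [exact Zb | exact Cab]].
Qed.
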